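(* Let $G=(V,E)$ be a finite connected undirected unweighted graph, let $\lambda\in[0,1]$, $r>0$, and $S\subseteq V$. If $r\ge 1$ then $\mathrm{fp}^{\lambda,r}_G(S)\ge \mathrm{fp}^{\lambda,1}_G(S)$, and if $r\le 1$ then $\mathrm{fp}^{\lambda,r}_G(S)\le \mathrm{fp}^{\lambda,1}_G(S)$.
   Context: The $\lambda$-mixed Moran process on a connected graph $G=(V,E)$ with $n=|V|\ge 2$ vertices: each vertex hosts either a resident (fitness $1$) or a mutant (fitness $r>0$); the state is the set $S_t\subseteq V$ of mutant vertices. $N(u)$ is the neighbor set of $u$. At each step, independently: with probability $\lambda$ a Birth-death step occurs (a vertex $u$ is chosen with probability proportional to its fitness among all vertices, then a uniformly random neighbor $v\in N(u)$ takes the type of $u$); with probability $1-\lambda$ a death-Birth step occurs (a uniformly random vertex $v$ dies, then a neighbor $u\in N(v)$ is chosen with probability proportional to fitness among $N(v)$, and $v$ takes the type of $u$). $\mathrm{fp}^{\lambda,r}_G(S)$ is the probability that, starting from $S_0=S$, the process reaches $S_t=V$. *)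

From HB Require Import structures.
From mathcomp Require Import all_boot all_order all_algebra.
From mathcomp Require Import all_classical all_reals topology normedtype sequences.
Set Implicit Arguments. Unset Strict Implicit. Unset Printing Implicit Defensive.
Import Order.TTheory GRing.Theory Num.Theory.
Import numFieldNormedType.Exports.
Local Open Scope ring_scope.

Definition simple_graph (V : finType) (e : rel V) : Prop :=
  symmetric e /\ irreflexive e.

Definition graph_connected (V : finType) (e : rel V) : Prop :=
  forall x y : V, connect e x y.

Definition nbhd (V : finType) (e : rel V) (u : V) : {set V} := [set v | e u v].

Section Moran.
Variables (R : realType) (V : finType) (e : rel V) (lam r : R).

(* fitness of vertex x in state S (S = set of mutants) *)
Definition fitness (S : {set V}) (x : V) : R := if x \in S then r else 1.

Definition upd (S : {set V}) (u v : V) : {set V} :=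
  if u \in S then v |: S else S :\ v.

Definition moran_step (S S' : {set V}) : R :=
  lam * (\sum_(u : V) (fitness S u / \sum_(w : V) fitness S w) *
           \sum_(v in nbhd e u) (#|nbhd e u|%:R)^-1 *
              (upd S u v == S')%:R)
  + (1 - lam) * (\sum_(v : V) (#|V|%:R)^-1 *
           \sum_(u in nbhd e v)
              (fitness S u / \sum_(w in nbhd e v) fitness S w) *
              (upd S u v == S')%:R).

Fixpoint moran_dist (S : {set V}) (t : nat) : {set V} -> R :=
  match t with
  | 0 => fun B => (B == S)%:R
  | t.+1 => fun B => \sum_(A : {set V}) moran_dist S t A * moran_step A B
  end.

(* fixation probability: probability that the process ever reaches S_t = V.
   Since V is absorbing, this is the limit of P(S_t = V) as t -> oo. *)
Definition fp (S : {set V}) : R := limn (fun t => moran_dist S t [set: V]).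

End Moran.

From HB Require Import structures.
From mathcomp Require Import all_boot all_order all_algebra.
From mathcomp Require Import all_classical all_reals topology normedtype sequences.
From mathcomp Require Import ring lra.
Set Implicit Arguments. Unset Strict Implicit. Unset Printing Implicit Defensive.
Import Order.TTheory GRing.Theory Num.Theory.
Import numFieldNormedType.Exports.
Local Open Scope ring_scope.

(* Let g_r(t, A) ([fixed_by r t A]) be the probability that the process with
   mutant fitness r, started from the mutant set A, has fixated by time t.  By
   induction on t, (r - 1) (g_r(t, A) - g_1(t, A)) >= 0.  Decomposing on the
   first step, g_r(t+1, A) - g_1(t+1, A) is the r-step average of
   g_r(t) - g_1(t) plus the difference between the r-step and the neutral-step
   averages of g_1(t).  The neutral transition probabilities do not depend on
   the state, so g_1(t) is monotone in the mutant set; raising r moves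
   selection weight from residents to mutants, and a mutant reproducing only
   enlarges the mutant set, so that difference has the sign of r - 1.  As V is
   absorbing, g_r(t, A) increases to the fixation probability, and the claim
   follows in the limit. *)

Lemma nbhd_card_gt0 (V : finType) (e : rel V) (u : V) :
  graph_connected e -> (1 < #|V|)%N -> (0 < #|nbhd e u|)%N.
Proof.
move=> conn_e V_gt1.
have [y] : exists y, y \in predC1 u by apply/card_gt0P; rewrite cardC1 -subn1 subn_gt0.
rewrite !inE => y_ne_u.
case/connectP: (conn_e u y) => [[|z p]] /=; first by move=> _ y_eq; rewrite y_eq eqxx in y_ne_u.
by case/andP => euz _ _; apply/card_gt0P; exists z; rewrite inE.
Qed.

Lemma sumr_reweight (R : pzRingType) (I : finType) (p q f : I -> R) (c : R) :
  \sum_i p i = \sum_i q i ->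
  \sum_i p i * f i - \sum_i q i * f i = \sum_i (p i - q i) * (f i - c).
Proof.
move=> sum_pq; under [RHS]eq_bigr => i _ do rewrite mulrBr.
rewrite sumrB -mulr_suml sumrB sum_pq subrr mul0r subr0.
by rewrite -sumrB; apply: eq_bigr => i _; rewrite mulrBl.
Qed.

Section Selection.
Variables (R : realType) (V : finType).
Implicit Types (r s x y : R) (A P : {set V}) (u w : V).

Definition type_signed A u x : bool := if u \in A then 0 <= x else x <= 0.

Lemma type_signed_sum (I : Type) (s : seq I) (Q : pred I) A u (F : I -> R) :
  (forall i, Q i -> type_signed A u (F i)) ->
  type_signed A u (\sum_(i <- s | Q i) F i).
Proof. by rewrite /type_signed; case: (u \in A); [apply: sumr_ge0 | apply: sumr_le0]. Qed.

Lemma type_signed0 A u : type_signed A u 0.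
Proof. by rewrite /type_signed lexx if_same. Qed.

Lemma type_signedD A u x y :
  type_signed A u x -> type_signed A u y -> type_signed A u (x + y).
Proof.
rewrite /type_signed; case: (u \in A); first exact: addr_ge0.
by move=> x_le0 y_le0; rewrite -(addr0 0) lerD.
Qed.

Lemma type_signedMl A u c x :
  0 <= c -> type_signed A u x -> type_signed A u (c * x).
Proof. by rewrite /type_signed => c_ge0; case: (u \in A); [apply: mulr_ge0 | apply: mulr_ge0_le0]. Qed.

Lemma type_signed_mul A u x y :
  type_signed A u x -> type_signed A u y -> 0 <= x * y.
Proof. by rewrite /type_signed; case: (u \in A); [apply: mulr_ge0 | apply: mulr_le0]. Qed.

Lemma fitness_gt0 r A u : 0 < r -> 0 < fitness r A u.
Proof. by rewrite /fitness; case: (u \in A). Qed.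

Lemma sum_fitness_gt0 r A P u : 0 < r -> u \in P ->
  0 < \sum_(w in P) fitness r A w.
Proof.
move=> r_gt0 uP; rewrite (bigD1 u) //=; apply: ltr_wpDr; last exact: fitness_gt0.
by apply: sumr_ge0 => w _; apply/ltW/fitness_gt0.
Qed.

Definition share r A P u : R := fitness r A u / \sum_(w in P) fitness r A w.

Lemma share_ge0 r A P u : 0 < r -> 0 <= share r A P u.
Proof.
move=> r_gt0; apply: divr_ge0; first exact/ltW/fitness_gt0.
by apply: sumr_ge0 => w _; apply/ltW/fitness_gt0.
Qed.

Lemma sum_share r A P u0 : 0 < r -> u0 \in P -> \sum_(u in P) share r A P u = 1.
Proof.
by move=> r_gt0 u0P; rewrite -mulr_suml divff // gt_eqF // (sum_fitness_gt0 A r_gt0 u0P).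
Qed.

Lemma share_neutral A B P u : share 1 A P u = share 1 B P u.
Proof.
rewrite /share /fitness !if_same; congr (_ / _).
by apply: eq_bigr => w _; rewrite !if_same.
Qed.

Lemma fitness_cross_signed r s A u w :
  type_signed A u ((r - s) * (fitness r A u * fitness s A w - fitness s A u * fitness r A w)).
Proof.
rewrite /type_signed /fitness.
have := sqr_ge0 (r - s); rewrite expr2.
by case: (u \in A); case: (w \in A) => /=; nra.
Qed.

Lemma share_signed r s A P u w0 : 0 < r -> 0 < s -> w0 \in P ->
  type_signed A u ((r - s) * (share r A P u - share s A P u)).
Proof.
move=> r_gt0 s_gt0 w0P.
have Fr_gt0 := sum_fitness_gt0 A r_gt0 w0P.
have Fs_gt0 := sum_fitness_gt0 A s_gt0 w0P.
set Fr := \sum_(w in P) fitness r A w in Fr_gt0 *.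
set Fs := \sum_(w in P) fitness s A w in Fs_gt0 *.
have -> : (r - s) * (share r A P u - share s A P u) = (Fr * Fs)^-1 *
    \sum_(w in P) (r - s) * (fitness r A u * fitness s A w - fitness s A u * fitness r A w).
  rewrite -mulr_sumr sumrB -!mulr_sumr /share -/Fr -/Fs.
  by field; rewrite !gt_eqF.
apply: type_signedMl; first by rewrite invr_ge0 ltW // mulr_gt0.
by apply: type_signed_sum => w _; apply: fitness_cross_signed.
Qed.

End Selection.

Section Chain.
Variables (R : realType) (V : finType) (e : rel V) (lam : R).
Implicit Types (r s : R) (A B : {set V}) (u v : V).

Definition bd_prob r A u v : R :=
  if v \in nbhd e u then share r A [set: V] u / #|nbhd e u|%:R else 0.

Definition db_prob r A u v : R :=
  if u \in nbhd e v then share r A (nbhd e v) u / #|V|%:R else 0.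

(* The probability that the next step makes v take the type of u. *)
Definition trans r A u v : R := lam * bd_prob r A u v + (1 - lam) * db_prob r A u v.

Lemma moran_stepE r A B :
  moran_step e lam r A B = \sum_u \sum_v trans r A u v * (upd A u v == B)%:R.
Proof.
have -> : \sum_u \sum_v trans r A u v * (upd A u v == B)%:R =
    lam * \sum_u \sum_v bd_prob r A u v * (upd A u v == B)%:R +
    (1 - lam) * \sum_u \sum_v db_prob r A u v * (upd A u v == B)%:R.
  rewrite !mulr_sumr -big_split; apply: eq_bigr => u _ /=.
  by rewrite !mulr_sumr -big_split; apply: eq_bigr => v _ /=; rewrite /trans mulrDl !mulrA.
have sum_setT : \sum_(w in [set: V]) fitness r A w = \sum_w fitness r A w.
  by apply: eq_bigl => w; rewrite inE.
congr (_ * _ + _ * _).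
  apply: eq_bigr => u _; rewrite mulr_sumr big_mkcond; apply: eq_bigr => v _.
  by rewrite /bd_prob /share sum_setT; case: ifP => _; [ring | rewrite mul0r].
rewrite exchange_big; apply: eq_bigr => v _; rewrite mulr_sumr big_mkcond.
by apply: eq_bigr => u _; rewrite /db_prob /share; case: ifP => _; [ring | rewrite mul0r].
Qed.

Lemma moran_step_sum r A (h : {set V} -> R) :
  \sum_B moran_step e lam r A B * h B = \sum_u \sum_v trans r A u v * h (upd A u v).
Proof.
under eq_bigr => B _ do rewrite moran_stepE big_distrl; rewrite exchange_big.
apply: eq_bigr => u _; under eq_bigr => B _ do rewrite big_distrl; rewrite exchange_big.
apply: eq_bigr => v _; rewrite (bigD1 (upd A u v)) //= eqxx mulr1 big1 ?addr0 // => B.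
by rewrite eq_sym => /negbTE->; rewrite mulr0 mul0r.
Qed.

Lemma moran_distSr r A t B :
  moran_dist e lam r A t.+1 B = \sum_C moran_dist e lam r A t C * moran_step e lam r C B.
Proof. by []. Qed.

Lemma moran_distSl r A t B :
  moran_dist e lam r A t.+1 B = \sum_C moran_step e lam r A C * moran_dist e lam r C t B.
Proof.
elim: t A B => [|t IH] A B; rewrite moran_distSr.
  rewrite (bigD1 A) //= eqxx mul1r big1 ?addr0; last by move=> C /negbTE->; rewrite mul0r.
  rewrite (bigD1 B) //= eqxx mulr1 big1 ?addr0 // => C.
  by rewrite eq_sym => /negbTE->; rewrite mulr0.
under eq_bigr => C _ do rewrite IH big_distrl; rewrite exchange_big.
apply: eq_bigr => D _; rewrite moran_distSr mulr_sumr.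
by apply: eq_bigr => C _; rewrite mulrA.
Qed.

Definition fixed_by r t A : R := moran_dist e lam r A t [set: V].

Lemma fixed_byS r t A :
  fixed_by r t.+1 A = \sum_u \sum_v trans r A u v * fixed_by r t (upd A u v).
Proof. by rewrite /fixed_by moran_distSl moran_step_sum. Qed.

Lemma updT u v : upd [set: V] u v = [set: V].
Proof. by rewrite /upd inE; apply/setP => x; rewrite !inE orbT. Qed.

Lemma upd_subset A B u v : A \subset B -> upd A u v \subset upd B u v.
Proof.
rewrite /upd => sAB; case: ifP => uA.
  by rewrite (fintype.subsetP sAB _ uA) finset.setUS.
case: ifP => _; last exact: finset.setSD.
apply: fintype.subset_trans (finset.subsetDl A [set v]) _.
exact: fintype.subset_trans sAB (finset.subsetUr _ _).
Qed.

Lemma upd_signed (h : {set V} -> R) A u v :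
  {homo h : X Y / X \subset Y >-> X <= Y} -> type_signed A u (h (upd A u v) - h A).
Proof.
rewrite /type_signed /upd => h_mono; case: (u \in A).
  by rewrite subr_ge0 h_mono // finset.subsetUr.
by rewrite subr_le0 h_mono // finset.subsetDl.
Qed.

Lemma trans_neutral A B u v : trans 1 A u v = trans 1 B u v.
Proof. by rewrite /trans /bd_prob /db_prob !(share_neutral _ A B). Qed.

End Chain.

Section Comparison.
Variables (R : realType) (V : finType) (e : rel V) (lam : R).
Hypotheses (lam_ge0 : 0 <= lam) (lam_le1 : lam <= 1).
Hypothesis nbhd_gt0 : forall u : V, (0 < #|nbhd e u|)%N.
Hypothesis V_gt0 : (0 < #|V|)%N.
Implicit Types (r s : R) (A B : {set V}) (u v : V).
Local Notation trans := (trans e lam).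
Local Notation fixed_by := (fixed_by e lam).

Lemma trans_ge0 r A u v : 0 < r -> 0 <= trans r A u v.
Proof.
move=> r_gt0; rewrite /trans /bd_prob /db_prob.
apply: addr_ge0; apply: mulr_ge0; rewrite ?subr_ge0 //; case: ifP => _ //.
  by apply: divr_ge0; [exact: share_ge0 | exact: ler0n].
by apply: divr_ge0; [exact: share_ge0 | exact: ler0n].
Qed.

Lemma sum_trans r A : 0 < r -> \sum_u \sum_v trans r A u v = 1.
Proof.
move=> r_gt0; have [u0 _] := card_gt0P V_gt0.
have sum_bd : \sum_u \sum_v bd_prob e r A u v = 1.
  rewrite -(sum_share A r_gt0 (finset.in_setT u0)).
  apply: eq_big => [u | u _]; first by rewrite inE.
  rewrite /bd_prob -big_mkcond sumr_const -(mulr_natr (share r A _ u / _)) divfK //.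
  by rewrite pnatr_eq0 -lt0n nbhd_gt0.
have sum_db : \sum_u \sum_v db_prob e r A u v = 1.
  have sum_v v : \sum_u db_prob e r A u v = #|V|%:R^-1.
    have [w0 w0v] := card_gt0P (nbhd_gt0 v).
    by rewrite /db_prob -big_mkcond -mulr_suml (sum_share A r_gt0 w0v) mul1r.
  rewrite exchange_big (eq_bigr _ (fun v _ => sum_v v)) sumr_const.
  by rewrite -(mulr_natr #|V|%:R^-1) mulVf // pnatr_eq0 -lt0n.
rewrite pair_bigA big_split -!mulr_sumr /= -!pair_bigA sum_bd sum_db.
by rewrite !mulr1 addrC subrK.
Qed.

Lemma trans_signed r s A u v : 0 < r -> 0 < s ->
  type_signed A u ((r - s) * (trans r A u v - trans s A u v)).
Proof.
move=> r_gt0 s_gt0.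
have -> : (r - s) * (trans r A u v - trans s A u v) =
    lam * ((r - s) * (bd_prob e r A u v - bd_prob e s A u v)) +
    (1 - lam) * ((r - s) * (db_prob e r A u v - db_prob e s A u v)).
  by rewrite /trans; ring.
apply: type_signedD; apply: type_signedMl; rewrite ?subr_ge0 //.
  rewrite /bd_prob; case: ifP => _; last by rewrite subrr mulr0 type_signed0.
  rewrite -mulrBl mulrA mulrC; apply: type_signedMl; first by rewrite invr_ge0.
  exact: share_signed r_gt0 s_gt0 (finset.in_setT u).
rewrite /db_prob; case: ifP => u_nv; last by rewrite subrr mulr0 type_signed0.
rewrite -mulrBl mulrA mulrC; apply: type_signedMl; first by rewrite invr_ge0.
exact: share_signed r_gt0 s_gt0 u_nv.
Qed.

Lemma trans_average_cmp r s A (h : {set V} -> R) : 0 < r -> 0 < s ->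
  {homo h : X Y / X \subset Y >-> X <= Y} ->
  0 <= (r - s) * (\sum_u \sum_v trans r A u v * h (upd A u v)
                  - \sum_u \sum_v trans s A u v * h (upd A u v)).
Proof.
move=> r_gt0 s_gt0 h_mono.
rewrite !pair_bigA (sumr_reweight _ (h A)); last by rewrite -!pair_bigA !sum_trans.
rewrite mulr_sumr; apply: sumr_ge0 => [[u v]] _ /=; rewrite mulrA.
exact: type_signed_mul (trans_signed _ _ _ r_gt0 s_gt0) (upd_signed _ _ _ h_mono).
Qed.

Lemma fixed_by_ge0 r t A : 0 < r -> 0 <= fixed_by r t A.
Proof.
move=> r_gt0; elim: t A => [|t IH] A; first exact: ler0n.
rewrite fixed_byS; apply: sumr_ge0 => u _; apply: sumr_ge0 => v _.
by apply: mulr_ge0; [exact: trans_ge0 | exact: IH].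
Qed.

Lemma fixed_by_le1 r t A : 0 < r -> fixed_by r t A <= 1.
Proof.
move=> r_gt0; elim: t A => [|t IH] A; first by rewrite /fixed_by /=; case: (_ == _).
rewrite fixed_byS -(sum_trans A r_gt0); apply: ler_sum => u _; apply: ler_sum => v _.
by rewrite -[leRHS]mulr1; apply: ler_wpM2l; [exact: trans_ge0 | exact: IH].
Qed.

Lemma fixed_byT r t : 0 < r -> fixed_by r t [set: V] = 1.
Proof.
move=> r_gt0; elim: t => [|t IH]; first by rewrite /fixed_by /= eqxx.
rewrite fixed_byS -[RHS](sum_trans [set: V] r_gt0).
by apply: eq_bigr => u _; apply: eq_bigr => v _; rewrite updT IH mulr1.
Qed.

Lemma fixed_by_nondecreasing r t A : 0 < r -> fixed_by r t A <= fixed_by r t.+1 A.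
Proof.
move=> r_gt0; elim: t A => [|t IH] A.
  have [->|A_ne_T] := eqVneq A [set: V]; first by rewrite !fixed_byT.
  by rewrite {1}/fixed_by /= eq_sym (negbTE A_ne_T); exact: fixed_by_ge0.
rewrite !fixed_byS; apply: ler_sum => u _; apply: ler_sum => v _.
by apply: ler_wpM2l; [exact: trans_ge0 | exact: IH].
Qed.

Lemma fixed_by_cvg r A : 0 < r -> cvgn (fun t => fixed_by r t A).
Proof.
move=> r_gt0; apply/cvg_ex; eexists; apply: nondecreasing_cvgn.
  apply/nondecreasing_seqP => t; exact: fixed_by_nondecreasing.
by exists 1 => _ [t _ <-]; exact: fixed_by_le1.
Qed.

Lemma fixed_by_neutral_mono t : {homo fixed_by 1 t : X Y / X \subset Y >-> X <= Y}.
Proof.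
elim: t => [|t IH] X Y sXY.
  rewrite /fixed_by /=; case: eqP => [X_T | _]; last exact: ler0n.
  by rewrite -X_T in sXY; rewrite finset.eqEsubset sXY finset.subsetT.
rewrite !fixed_byS; apply: ler_sum => u _; apply: ler_sum => v _.
rewrite (trans_neutral _ _ X Y); apply: ler_wpM2l; first exact: trans_ge0 ltr01.
exact/IH/upd_subset.
Qed.

Lemma fixed_by_cmp r t A : 0 < r -> 0 <= (r - 1) * (fixed_by r t A - fixed_by 1 t A).
Proof.
move=> r_gt0; elim: t A => [|t IH] A; first by rewrite /fixed_by /= subrr mulr0.
rewrite !fixed_byS.
set a := \sum_u \sum_v trans r A u v * fixed_by r t (upd A u v).
set b := \sum_u \sum_v trans r A u v * fixed_by 1 t (upd A u v).
set c := \sum_u \sum_v trans 1 A u v * fixed_by 1 t (upd A u v).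
have -> : a - c = (a - b) + (b - c) by rewrite addrA subrK.
rewrite mulrDr; apply: addr_ge0.
  rewrite /a /b !pair_bigA -sumrB mulr_sumr; apply: sumr_ge0 => -[u v] _ /=.
  by rewrite -mulrBr mulrCA; apply: mulr_ge0; [exact: trans_ge0 | exact: IH].
exact: trans_average_cmp r_gt0 ltr01 (@fixed_by_neutral_mono t).
Qed.

Lemma fixed_by_neutral_le r t A : 1 <= r -> fixed_by 1 t A <= fixed_by r t A.
Proof.
move=> r_ge1; have [-> // | r_ne1] := eqVneq r 1.
have r_gt1 : 1 < r by rewrite lt_neqAle eq_sym r_ne1.
have := fixed_by_cmp t A (lt_le_trans ltr01 r_ge1).
by rewrite pmulr_rge0 ?subr_gt0 // subr_ge0.
Qed.

Lemma fixed_by_le_neutral r t A : 0 < r -> r <= 1 -> fixed_by r t A <= fixed_by 1 t A.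
Proof.
move=> r_gt0 r_le1; have [-> // | r_ne1] := eqVneq r 1.
have r_lt1 : r < 1 by rewrite lt_neqAle r_ne1.
have := fixed_by_cmp t A r_gt0.
by rewrite nmulr_rge0 ?subr_lt0 // subr_le0.
Qed.

End Comparison.

Theorem mainTheorem2 (R : realType) (V : finType) (e : rel V)
  (lam r : R) (S : {set V}) :
  simple_graph e -> graph_connected e -> (2 <= #|V|)%N ->
  0 <= lam <= 1 -> 0 < r ->
  (1 <= r -> fp e lam 1 S <= fp e lam r S) /\
  (r <= 1 -> fp e lam r S <= fp e lam 1 S).
Proof.
move=> _ conn_e V_gt1 /andP[lam_ge0 lam_le1] r_gt0.
have nbhd_gt0 u := nbhd_card_gt0 u conn_e V_gt1.
have V_gt0 : (0 < #|V|)%N by exact: ltnW.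
have cvg_fixed := fixed_by_cvg lam_ge0 lam_le1 nbhd_gt0 V_gt0.
split => [r_ge1 | r_le1]; apply: ler_lim.
- exact: cvg_fixed ltr01.
- exact: cvg_fixed r_gt0.
- by apply: nearW => t; apply: fixed_by_neutral_le.
- exact: cvg_fixed r_gt0.
- exact: cvg_fixed ltr01.
- by apply: nearW => t; apply: fixed_by_le_neutral.
Qed.
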